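(* Under the hypotheses of the previous lemma (standing assumptions, SLC and BUC, each $B_k$ nonnegative doubly stochastic scrambling with nonzero entries at least a fixed $\kappa>0$), and assuming the step sizes satisfy $\alpha_k>0$, $\alpha_{k+1}\le\alpha_k$ for all $k$, $\sum_k\alpha_k=\infty$ and $\sum_k\alpha_k^2<\infty$, the server iterates reach consensus asymptotically: $$\lim_{k\to\infty}\max_{I,G}\|x^I_{0,k}-x^G_{0,k}\|=0.$$
   Context: Standing setup. Integers $S\ge1$ (servers), $C\ge1$ (clients), $D\ge1$, $\Delta\ge1$. $\mathcal{X}\subseteq\mathbb{R}^D$ is a nonempty convex compact set and $\mathcal{P}_{\mathcal{X}}$ is Euclidean projection onto $\mathcal{X}$. For $h=1,\dots,C$, $f_h:\mathbb{R}^D\to\mathbb{R}$ is continuously differentiable and convex with gradient $g_h$; there are constants $L_h$ with $\|g_h(x)\|\le L_h$ for all $x\in\mathcal{X}$ and constants $N_h>0$ with $\|g_h(x)-g_h(y)\|\le N_h\|x-y\|$ for all $x,y\in\mathcal{X}$. Set $\mathbf{L}=\sum_h L_h$, $\mathbf{N}=\sum_h N_h$. Norms are Euclidean. Weight matrices $W_{i,k}\in\mathbb{R}^{S\times C}$ ($0\le i\le\Delta-1$, $k\ge0$), entries possibly negative. Symmetric Learning Condition (SLC): there is $M>0$ with $\sum_{i=1}^{\Delta}\sum_{J=1}^S W_{i-1,k}[J,h]=M$ for all $k\ge0$ and all $h$. Bounded Update Condition (BUC): there is $\bar M>0$ with $\sum_{i=1}^{\Delta}\sum_{J=1}^S |W_{i-1,k}[J,h]|\le\bar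 M$ for all $k,h$. Consensus matrices $B_k\in\mathbb{R}^{S\times S}$ have nonnegative entries. Iteration: given $x^J_{0,0}\in\mathcal{X}$ ($J=1,\dots,S$), for each $k\ge0$ and $i=1,\dots,\Delta$, $x^J_{i,k}=\mathcal{P}_{\mathcal{X}}\big[x^J_{i-1,k}-\alpha_k\sum_{h=1}^C W_{i-1,k}[J,h]\,g_h(x^J_{i-1,k})\big]$, and then $x^I_{0,k+1}=\sum_{J=1}^S B_k[I,J]\,x^J_{\Delta,k}$. A square matrix $B$ is scrambling if for every two rows $I,G$ there is a column $J$ with $B[I,J]>0$ and $B[G,J]>0$. *)

(* Stdlib reals. Vectors of R^D are represented as functions nat -> R,
   only the first D coordinates being meaningful. *)
From Stdlib Require Import Reals Lra.
Open Scope R_scope.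

Definition Vec := nat -> R.

Fixpoint rsum (n : nat) (f : nat -> R) : R :=
  match n with O => 0 | S m => rsum m f + f m end.

Fixpoint rmax (n : nat) (f : nat -> R) : R :=
  match n with O => 0 | S m => Rmax (rmax m f) (f m) end.

Definition vadd (x y : Vec) : Vec := fun d => x d + y d.
Definition vsub (x y : Vec) : Vec := fun d => x d - y d.
Definition vscale (a : R) (x : Vec) : Vec := fun d => a * x d.
Definition vsum (n : nat) (F : nat -> Vec) : Vec := fun d => rsum n (fun j => F j d).

Definition dot (D : nat) (x y : Vec) : R := rsum D (fun d => x d * y d).
Definition norm (D : nat) (x : Vec) : R := sqrt (dot D x x).

Definition inRD (D : nat) (x : Vec) : Prop := forall d, (D <= d)%nat -> x d = 0.

Definition convex_set (D : nat) (X : Vec -> Prop) : Prop :=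
  forall x y t, X x -> X y -> 0 <= t <= 1 ->
    X (vadd (vscale t x) (vscale (1 - t) y)).

Definition bounded_set (D : nat) (X : Vec -> Prop) : Prop :=
  exists M, forall x, X x -> norm D x <= M.

Definition closed_set (D : nat) (X : Vec -> Prop) : Prop :=
  forall (u : nat -> Vec) (y : Vec), (forall n, X (u n)) -> inRD D y ->
    Un_cv (fun n => norm D (vsub (u n) y)) 0 -> X y.

Definition ncc_set (D : nat) (X : Vec -> Prop) : Prop :=
  (forall x, X x -> inRD D x) /\ (exists x, X x) /\
  convex_set D X /\ bounded_set D X /\ closed_set D X.

Definition is_projection (D : nat) (X : Vec -> Prop) (P : Vec -> Vec) : Prop :=
  forall y, inRD D y ->
    X (P y) /\ forall z, X z -> norm D (vsub y (P y)) <= norm D (vsub y z).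

Definition convex_fun (D : nat) (f : Vec -> R) : Prop :=
  forall x y t, inRD D x -> inRD D y -> 0 <= t <= 1 ->
    f (vadd (vscale t x) (vscale (1 - t) y)) <= t * f x + (1 - t) * f y.

Definition is_gradient (D : nat) (f : Vec -> R) (g : Vec -> Vec) : Prop :=
  forall x, inRD D x ->
    inRD D (g x) /\
    forall eps, 0 < eps -> exists delta, 0 < delta /\
      forall h, inRD D h -> norm D h < delta ->
        Rabs (f (vadd x h) - f x - dot D (g x) h) <= eps * norm D h.

Definition continuous_on_RD (D : nat) (g : Vec -> Vec) : Prop :=
  forall x, inRD D x -> forall eps, 0 < eps -> exists delta, 0 < delta /\
    forall y, inRD D y -> norm D (vsub y x) < delta -> norm D (vsub (g y) (g x)) < eps.

(* One local step i (i = 1..Delta) of all servers, uses W_{i-1,k}: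
   st J = x^J_{i-1,k}; result J = x^J_{i,k}. Argument im1 = i-1. *)
Definition local_step (C : nat) (P : Vec -> Vec) (alpha : nat -> R)
  (W : nat -> nat -> nat -> nat -> R) (g : nat -> Vec -> Vec)
  (k im1 : nat) (st : nat -> Vec) : nat -> Vec :=
  fun J => P (vsub (st J)
                   (vscale (alpha k) (vsum C (fun h => vscale (W im1 k J h) (g h (st J)))))).

(* inner_iter k i st0 = (x^J_{i,k})_J given st0 = (x^J_{0,k})_J *)
Fixpoint inner_iter (C : nat) (P : Vec -> Vec) (alpha : nat -> R)
  (W : nat -> nat -> nat -> nat -> R) (g : nat -> Vec -> Vec)
  (k i : nat) (st0 : nat -> Vec) : nat -> Vec :=
  match i with
  | O => st0
  | S m => local_step C P alpha W g k m (inner_iter C P alpha W g k m st0)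
  end.

(* server_iter k = (x^J_{0,k})_J ; W i k J h = W_{i,k}[J,h] ; B k I J = B_k[I,J] *)
Fixpoint server_iter (S C Delta : nat) (P : Vec -> Vec) (alpha : nat -> R)
  (W : nat -> nat -> nat -> nat -> R) (B : nat -> nat -> nat -> R)
  (g : nat -> Vec -> Vec) (x0 : nat -> Vec) (k : nat) : nat -> Vec :=
  match k with
  | O => x0
  | S m => fun I => vsum S (fun J => vscale (B m I J)
             (inner_iter C P alpha W g m Delta (server_iter S C Delta P alpha W B g x0 m) J))
  end.

Definition scrambling (S : nat) (Bk : nat -> nat -> R) : Prop :=
  forall I G, (I < S)%nat -> (G < S)%nat ->
    exists J, (J < S)%nat /\ 0 < Bk I J /\ 0 < Bk G J.

From Stdlib Require Import Reals Lra Lia FunctionalExtensionality.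
Open Scope R_scope.

(* Each local step is a projected gradient step of length O(alpha_k), so during one round
   every server stays in X and moves by O(alpha_k) in each coordinate. Averaging with a
   scrambling matrix whose positive entries are at least kappa shrinks the spread
   max_J x^J_d - min_J x^J_d of every coordinate by the factor 1 - kappa. Summing over the
   coordinates, the total spread V_k satisfies V_(k+1) <= (1 - kappa) V_k + c alpha_k, so it
   tends to 0 because alpha_k does (its squares are summable); and V_k bounds the distance
   between any two servers. *)

Lemma rsum_ext n f g : (forall j, (j < n)%nat -> f j = g j) -> rsum n f = rsum n g.
Proof.
  induction n as [|n IH]; intros H; simpl; [reflexivity|].
  rewrite IH, H; [reflexivity | lia | intros; apply H; lia].
Qed.

Lemma rsum_le n f g : (forall j, (j < n)%nat -> f j <= g j) -> rsum n f <= rsum n g.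
Proof.
  induction n as [|n IH]; intros H; simpl; [lra|].
  assert (f n <= g n) by (apply H; lia).
  assert (rsum n f <= rsum n g) by (apply IH; intros; apply H; lia).
  lra.
Qed.

Lemma rsum_add n f g : rsum n (fun j => f j + g j) = rsum n f + rsum n g.
Proof. induction n as [|n IH]; simpl; [ring | rewrite IH; ring]. Qed.

Lemma rsum_scal n c f : rsum n (fun j => c * f j) = c * rsum n f.
Proof. induction n as [|n IH]; simpl; [ring | rewrite IH; ring]. Qed.

Lemma rsum_const n c : rsum n (fun _ => c) = INR n * c.
Proof. induction n as [|n IH]; simpl rsum; [simpl; ring | rewrite IH, S_INR; ring]. Qed.

Lemma rsum_nonneg n f : (forall j, (j < n)%nat -> 0 <= f j) -> 0 <= rsum n f.
Proof.
  intros H. replace 0 with (rsum n (fun _ => 0)) by (rewrite rsum_const; ring).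
  apply rsum_le; exact H.
Qed.

Lemma rsum_ge_term n f j :
  (forall j, (j < n)%nat -> 0 <= f j) -> (j < n)%nat -> f j <= rsum n f.
Proof.
  induction n as [|n IH]; intros H Hj; [lia|]. simpl.
  assert (0 <= f n) by (apply H; lia).
  destruct (Nat.eq_dec j n) as [->|Hjn].
  - assert (0 <= rsum n f) by (apply rsum_nonneg; intros; apply H; lia). lra.
  - assert (f j <= rsum n f) by (apply IH; [intros; apply H; lia | lia]). lra.
Qed.

Lemma Rabs_rsum_le n f : Rabs (rsum n f) <= rsum n (fun j => Rabs (f j)).
Proof.
  induction n as [|n IH]; simpl; [rewrite Rabs_R0; lra|].
  eapply Rle_trans; [apply Rabs_triang | lra].
Qed.

Lemma rmax_nonneg n f : 0 <= rmax n f.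
Proof. induction n as [|n IH]; simpl; [lra | eapply Rle_trans; [exact IH | apply Rmax_l]]. Qed.

Lemma rmax_lub n f c : 0 <= c -> (forall j, (j < n)%nat -> f j <= c) -> rmax n f <= c.
Proof.
  induction n as [|n IH]; intros Hc H; simpl; [exact Hc|].
  apply Rmax_lub; [apply IH; auto | apply H; lia].
Qed.

Lemma Rabs_coord_le_norm D v d : (d < D)%nat -> Rabs (v d) <= norm D v.
Proof.
  intros Hd. unfold norm. rewrite <- sqrt_Rsqr_abs. apply sqrt_le_1_alt.
  unfold Rsqr, dot. apply (rsum_ge_term D (fun d => v d * v d)); auto.
  intros; nra.
Qed.

Lemma norm_le_rsum_abs D v : norm D v <= rsum D (fun d => Rabs (v d)).
Proof.
  assert (Hnn : forall n, 0 <= rsum n (fun d => Rabs (v d)))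
    by (intros; apply rsum_nonneg; intros; apply Rabs_pos).
  unfold norm. rewrite <- (sqrt_Rsqr _ (Hnn D)). apply sqrt_le_1_alt.
  unfold Rsqr, dot. induction D as [|n IH]; simpl; [lra|].
  assert (Rabs (v n) * Rabs (v n) = v n * v n) by (rewrite <- Rabs_mult; apply Rabs_pos_eq; nra).
  pose proof (Rabs_pos (v n)). pose proof (Hnn n). nra.
Qed.

(* Both are [f 0] when [n = 0]. *)
Fixpoint maxf (n : nat) (f : nat -> R) : R :=
  match n with O => f O | S m => Rmax (maxf m f) (f m) end.
Fixpoint minf (n : nat) (f : nat -> R) : R :=
  match n with O => f O | S m => Rmin (minf m f) (f m) end.

Definition spread (n : nat) (f : nat -> R) : R := maxf n f - minf n f.

Lemma maxf_ub n f j : (j < n)%nat -> f j <= maxf n f.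
Proof.
  induction n as [|n IH]; intros Hj; [lia|]. simpl.
  destruct (Nat.eq_dec j n) as [->|]; [apply Rmax_r|].
  eapply Rle_trans; [apply IH; lia | apply Rmax_l].
Qed.

Lemma maxf_lub n f c : (1 <= n)%nat -> (forall j, (j < n)%nat -> f j <= c) -> maxf n f <= c.
Proof.
  induction n as [|[|n] IH]; intros Hn H; [lia | simpl; apply Rmax_lub; apply H; lia|].
  simpl maxf. apply Rmax_lub; [apply IH; [lia | intros; apply H; lia] | apply H; lia].
Qed.

Lemma minf_lb n f j : (j < n)%nat -> minf n f <= f j.
Proof.
  induction n as [|n IH]; intros Hj; [lia|]. simpl.
  destruct (Nat.eq_dec j n) as [->|]; [apply Rmin_r|].
  eapply Rle_trans; [apply Rmin_l | apply IH; lia].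
Qed.

Lemma minf_glb n f c : (1 <= n)%nat -> (forall j, (j < n)%nat -> c <= f j) -> c <= minf n f.
Proof.
  induction n as [|[|n] IH]; intros Hn H; [lia | simpl; apply Rmin_glb; apply H; lia|].
  simpl minf. apply Rmin_glb; [apply IH; [lia | intros; apply H; lia] | apply H; lia].
Qed.

Lemma spread_le n f c : (1 <= n)%nat ->
  (forall I G, (I < n)%nat -> (G < n)%nat -> f I - f G <= c) -> spread n f <= c.
Proof.
  intros Hn H. unfold spread.
  assert (maxf n f - c <= minf n f); [|lra].
  apply minf_glb; auto. intros G HG.
  assert (maxf n f <= c + f G); [|lra].
  apply maxf_lub; auto. intros I HI. specialize (H I G HI HG). lra.
Qed.

Lemma spread_nonneg n f : (1 <= n)%nat -> 0 <= spread n f.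
Proof.
  intros. unfold spread.
  pose proof (maxf_ub n f 0 ltac:(lia)). pose proof (minf_lb n f 0 ltac:(lia)). lra.
Qed.

Lemma Rabs_sub_le_spread n f I G : (I < n)%nat -> (G < n)%nat -> Rabs (f I - f G) <= spread n f.
Proof.
  intros HI HG. unfold spread. apply Rabs_le.
  pose proof (maxf_ub n f I HI). pose proof (minf_lb n f I HI).
  pose proof (maxf_ub n f G HG). pose proof (minf_lb n f G HG). lra.
Qed.

Lemma spread_perturb n f g e : (1 <= n)%nat ->
  (forall j, (j < n)%nat -> Rabs (f j - g j) <= e) -> spread n f <= spread n g + 2 * e.
Proof.
  intros Hn H. apply spread_le; auto. intros I G HI HG. unfold spread.
  pose proof (Rle_abs (f I - g I)) as HfI. pose proof (H I HI).
  pose proof (Rle_abs (g G - f G)) as HfG. rewrite Rabs_minus_sym in HfG. pose proof (H G HG).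
  pose proof (maxf_ub n g I HI). pose proof (minf_lb n g G HG). lra.
Qed.

Lemma rsum_sub n f g : rsum n (fun j => f j - g j) = rsum n f - rsum n g.
Proof. induction n as [|n IH]; simpl; [ring | rewrite IH; ring]. Qed.

Lemma Rabs_le_rsum2_abs m n (w : nat -> nat -> R) i j : (i < m)%nat -> (j < n)%nat ->
  Rabs (w i j) <= rsum m (fun i => rsum n (fun j => Rabs (w i j))).
Proof.
  intros Hi Hj.
  eapply Rle_trans; [| apply (rsum_ge_term m (fun i => rsum n (fun j => Rabs (w i j))) i); auto].
  - apply (rsum_ge_term n (fun j => Rabs (w i j))); auto. intros; apply Rabs_pos.
  - intros; apply rsum_nonneg; intros; apply Rabs_pos.
Qed.

(* Both averages share the mass [min (a j) (b j)], of total at least [kappa]; only the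
   remaining mass, at most [1 - kappa], can sit at different points of [[lo, hi]]. *)
Lemma weighted_avg_sub_le n (a b z : nat -> R) kappa lo hi :
  (forall j, (j < n)%nat -> 0 <= a j) -> (forall j, (j < n)%nat -> 0 <= b j) ->
  rsum n a = 1 -> rsum n b = 1 ->
  (exists j, (j < n)%nat /\ kappa <= a j /\ kappa <= b j) ->
  (forall j, (j < n)%nat -> lo <= z j <= hi) ->
  rsum n (fun j => a j * z j) - rsum n (fun j => b j * z j) <= (1 - kappa) * (hi - lo).
Proof.
  intros Ha Hb Sa Sb [j0 [Hj0 [Ka Kb]]] Hz.
  set (m := fun j => Rmin (a j) (b j)).
  assert (Hm0 : forall j, (j < n)%nat -> 0 <= m j) by (intros; apply Rmin_glb; auto).
  assert (Hmk : kappa <= rsum n m).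
  { eapply Rle_trans; [| apply (rsum_ge_term n m j0 Hm0 Hj0)]. apply Rmin_glb; auto. }
  assert (Hm1 : rsum n m <= 1) by (rewrite <- Sa; apply rsum_le; intros; apply Rmin_l).
  assert (Hup : rsum n (fun j => a j * z j)
                <= rsum n (fun j => m j * z j) + hi * (rsum n a - rsum n m)).
  { rewrite <- rsum_sub, <- rsum_scal, <- rsum_add. apply rsum_le. intros j Hj.
    specialize (Hz j Hj). assert (m j <= a j) by apply Rmin_l. nra. }
  assert (Hlow : rsum n (fun j => m j * z j) + lo * (rsum n b - rsum n m)
                 <= rsum n (fun j => b j * z j)).
  { rewrite <- rsum_sub, <- rsum_scal, <- rsum_add. apply rsum_le. intros j Hj.
    specialize (Hz j Hj). assert (m j <= b j) by apply Rmin_r. nra. }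
  rewrite Sa in Hup. rewrite Sb in Hlow. specialize (Hz j0 Hj0). nra.
Qed.

Lemma convex_weighted_sum D X n (w : nat -> R) (z : nat -> Vec) : convex_set D X ->
  (forall j, (j < n)%nat -> 0 <= w j) -> (forall j, (j < n)%nat -> X (z j)) ->
  0 < rsum n w -> exists p, X p /\ vsum n (fun j => vscale (w j) (z j)) = vscale (rsum n w) p.
Proof.
  intros Hcvx. induction n as [|n IH]; intros Hw Hz Hpos; simpl in Hpos; [lra|].
  assert (Ht : 0 <= rsum n w) by (apply rsum_nonneg; intros; apply Hw; lia).
  assert (Hwn : 0 <= w n) by (apply Hw; lia).
  destruct (Req_dec (rsum n w) 0) as [E|E].
  - assert (Hw0 : forall j, (j < n)%nat -> w j = 0).
    { intros j Hj. assert (w j <= rsum n w) by (apply rsum_ge_term; auto; intros; apply Hw; lia).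
      assert (0 <= w j) by (apply Hw; lia). lra. }
    exists (z n). split; [apply Hz; lia|]. apply functional_extensionality. intros d.
    unfold vsum, vscale. simpl. rewrite E.
    rewrite (rsum_ext n _ (fun _ => 0 * 0)) by (intros j Hj; rewrite Hw0 by exact Hj; ring).
    rewrite rsum_const. ring.
  - destruct IH as [p [Hp Ep]]; [intros; apply Hw; lia | intros; apply Hz; lia | lra |].
    set (t := rsum n w + w n).
    exists (vadd (vscale (rsum n w / t) p) (vscale (1 - rsum n w / t) (z n))). split.
    + apply Hcvx; [exact Hp | apply Hz; lia |]. unfold t. split.
      * unfold Rdiv. apply Rmult_le_pos; [lra | left; apply Rinv_0_lt_compat; lra].
      * unfold Rdiv. rewrite <- (Rinv_r (rsum n w + w n)) by lra.
        apply Rmult_le_compat_r; [left; apply Rinv_0_lt_compat |]; lra.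
    + apply functional_extensionality. intros d.
      assert (Ed := f_equal (fun v => v d) Ep). unfold vsum, vscale, vadd in *. simpl in *.
      rewrite Ed. unfold t. field. lra.
Qed.

Lemma Un_cv_const c : Un_cv (fun _ => c) c.
Proof. intros eps Heps. exists 0%nat. intros. unfold R_dist. rewrite Rminus_diag, Rabs_R0. exact Heps. Qed.

Lemma series_terms_cv_0 a l : Un_cv (fun n => sum_f_R0 a n) l -> Un_cv a 0.
Proof.
  intros Hl. apply (CV_shift a 1).
  replace (fun n => a (n + 1)%nat) with (fun n => sum_f_R0 a (n + 1) - sum_f_R0 a n).
  - replace 0 with (l - l) by ring.
    apply CV_minus; [exact (CV_shift' (fun n => sum_f_R0 a n) 1 l Hl) | exact Hl].
  - apply functional_extensionality. intros n. rewrite Nat.add_1_r. simpl. ring.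
Qed.

Lemma Un_cv_0_of_sq u : (forall k, 0 <= u k) -> Un_cv (fun k => u k ^ 2) 0 -> Un_cv u 0.
Proof.
  intros Hu H.
  replace u with (fun k => sqrt (u k ^ 2)) by
    (apply functional_extensionality; intros k; apply sqrt_pow2, Hu).
  rewrite <- sqrt_0. apply continuity_seq; [apply continuity_pt_sqrt; lra | exact H].
Qed.

(* Once [u <= (1 - r) eps / 2], the excess [V - eps / 2] is multiplied by at most [r] at each step. *)
Lemma contracting_recursion_cv_0 (V u : nat -> R) r : 0 <= r < 1 -> (forall k, 0 <= V k) ->
  (forall k, V (S k) <= r * V k + u k) -> Un_cv u 0 -> Un_cv V 0.
Proof.
  intros Hr HV Hrec Hu eps Heps.
  destruct (Hu ((1 - r) * eps / 2)) as [K HK]; [nra|].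
  set (A := Rmax (V K - eps / 2) 0).
  assert (HA : 0 <= A) by apply Rmax_r.
  assert (Hexcess : forall n, V (K + n)%nat - eps / 2 <= r ^ n * A).
  { induction n as [|n IH].
    - rewrite Nat.add_0_r, pow_O, Rmult_1_l. apply Rmax_l.
    - rewrite Nat.add_succ_r. specialize (Hrec (K + n)%nat).
      specialize (HK (K + n)%nat ltac:(lia)). unfold R_dist in HK.
      rewrite Rminus_0_r in HK. pose proof (Rle_abs (u (K + n)%nat)).
      assert (r * (V (K + n)%nat - eps / 2) <= r * (r ^ n * A)) by (apply Rmult_le_compat_l; lra).
      simpl. nra. }
  destruct (pow_lt_1_zero r ltac:(rewrite Rabs_pos_eq; lra) (eps / 2 / (A + 1))) as [N HN].
  { apply Rdiv_lt_0_compat; lra. }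
  exists (K + N)%nat. intros k Hk. unfold R_dist. rewrite Rminus_0_r, Rabs_pos_eq by auto.
  specialize (HN (k - K)%nat ltac:(lia)). specialize (Hexcess (k - K)%nat).
  replace (K + (k - K))%nat with k in Hexcess by lia.
  set (q := r ^ (k - K)) in *. assert (0 <= q) by (apply pow_le; lra).
  rewrite Rabs_pos_eq in HN by auto.
  assert (q * (A + 1) < eps / 2).
  { replace (eps / 2) with (eps / 2 / (A + 1) * (A + 1)) by (field; lra).
    apply Rmult_lt_compat_r; lra. }
  nra.
Qed.

Lemma proj_coord_dist_le D X P x y d : is_projection D X P -> inRD D y -> X x -> (d < D)%nat ->
  Rabs (P y d - x d) <= 2 * norm D (vsub y x).
Proof.
  intros HP Hy Hx Hd. destruct (HP y Hy) as [_ Hmin].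
  replace (P y d - x d) with (- vsub y (P y) d + vsub y x d) by (unfold vsub; ring).
  eapply Rle_trans; [apply Rabs_triang|]. rewrite Rabs_Ropp.
  pose proof (Rabs_coord_le_norm D (vsub y (P y)) d Hd).
  pose proof (Rabs_coord_le_norm D (vsub y x) d Hd).
  pose proof (Hmin x Hx). lra.
Qed.

Section Consensus.

Variables (ns nc D Delta : nat) (X : Vec -> Prop) (P : Vec -> Vec)
  (g : nat -> Vec -> Vec) (L : nat -> R) (W : nat -> nat -> nat -> nat -> R) (Mbar : R)
  (B : nat -> nat -> nat -> R) (kappa : R) (alpha : nat -> R) (x0 : nat -> Vec).

Hypothesis Hns : (1 <= ns)%nat.
Hypothesis HXin : forall x, X x -> inRD D x.
Hypothesis Hcvx : convex_set D X.
Hypothesis HP : is_projection D X P.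
Hypothesis Hgin : forall h x, (h < nc)%nat -> inRD D x -> inRD D (g h x).
Hypothesis HL : forall h x, (h < nc)%nat -> X x -> norm D (g h x) <= L h.
Hypothesis HW : forall k i J h, (i < Delta)%nat -> (J < ns)%nat -> (h < nc)%nat ->
  Rabs (W i k J h) <= Mbar.
Hypothesis Halpha : forall k, 0 <= alpha k.
Hypothesis Hkappa : 0 < kappa.
Hypothesis HBnn : forall k I J, (I < ns)%nat -> (J < ns)%nat -> 0 <= B k I J.
Hypothesis HBrow : forall k I, (I < ns)%nat -> rsum ns (fun J => B k I J) = 1.
Hypothesis HBscr : forall k, scrambling ns (B k).
Hypothesis HBkappa : forall k I J, (I < ns)%nat -> (J < ns)%nat -> 0 < B k I J -> kappa <= B k I J.
Hypothesis Hx0 : forall J, (J < ns)%nat -> X (x0 J).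

Local Notation step_dir k i J x := (vsum nc (fun h => vscale (W i k J h) (g h x))).
Local Notation inner k i st := (inner_iter nc P alpha W g k i st).
Local Notation xs k := (server_iter ns nc Delta P alpha W B g x0 k).

Local Notation step_bound := (2 * (INR D * (Mbar * rsum nc L))).

Lemma step_dir_coord_le k i J x d : (i < Delta)%nat -> (J < ns)%nat -> X x -> (d < D)%nat ->
  Rabs (step_dir k i J x d) <= Mbar * rsum nc L.
Proof.
  intros Hi HJ Hx Hd. unfold vsum, vscale.
  eapply Rle_trans; [apply Rabs_rsum_le|]. rewrite <- rsum_scal. apply rsum_le. intros h Hh.
  rewrite Rabs_mult. apply Rmult_le_compat; try apply Rabs_pos; [apply HW; auto|].
  eapply Rle_trans; [apply Rabs_coord_le_norm, Hd | apply HL; auto].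
Qed.

Lemma local_step_spec k i st J : (i < Delta)%nat -> (J < ns)%nat -> X (st J) ->
  X (local_step nc P alpha W g k i st J) /\
  forall d, (d < D)%nat -> Rabs (local_step nc P alpha W g k i st J d - st J d) <= step_bound * alpha k.
Proof.
  intros Hi HJ Hx. unfold local_step.
  set (v := step_dir k i J (st J)).
  set (y := vsub (st J) (vscale (alpha k) v)).
  assert (Hy : inRD D y).
  { intros d Hd. unfold y, v, vsub, vscale, vsum. rewrite (HXin _ Hx d Hd).
    rewrite (rsum_ext nc _ (fun _ => 0 * 0)) by
      (intros h Hh; rewrite (Hgin h (st J) Hh (HXin _ Hx) d Hd); ring).
    rewrite rsum_const. ring. }
  assert (Hyx : norm D (vsub y (st J)) <= INR D * (alpha k * (Mbar * rsum nc L))).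
  { eapply Rle_trans; [apply norm_le_rsum_abs|]. rewrite <- rsum_const. apply rsum_le.
    intros d Hd. unfold y, vsub, vscale.
    replace (st J d - alpha k * v d - st J d) with (- (alpha k * v d)) by ring.
    rewrite Rabs_Ropp, Rabs_mult, (Rabs_pos_eq (alpha k)) by apply Halpha.
    apply Rmult_le_compat_l; [apply Halpha | apply step_dir_coord_le; auto]. }
  split; [exact (proj1 (HP y Hy))|]. intros d Hd.
  eapply Rle_trans; [apply (proj_coord_dist_le D X P); eauto | lra].
Qed.

Lemma inner_iter_spec k st : (forall J, (J < ns)%nat -> X (st J)) ->
  forall i J, (i <= Delta)%nat -> (J < ns)%nat ->
  X (inner k i st J) /\
  forall d, (d < D)%nat -> Rabs (inner k i st J d - st J d) <= INR i * (step_bound * alpha k).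
Proof.
  intros Hst. induction i as [|i IH]; intros J Hi HJ.
  - split; [exact (Hst J HJ)|]. intros d _. simpl. rewrite Rminus_diag, Rabs_R0. lra.
  - destruct (IH J ltac:(lia) HJ) as [HXi Hdi]. cbn [inner_iter].
    destruct (local_step_spec k i (inner k i st) J ltac:(lia) HJ HXi) as [HX' Hd'].
    split; [exact HX'|]. intros d Hd. rewrite S_INR.
    specialize (Hd' d Hd). specialize (Hdi d Hd).
    replace (local_step nc P alpha W g k i (inner k i st) J d - st J d)
      with ((inner k i st J d - st J d)
            + (local_step nc P alpha W g k i (inner k i st) J d - inner k i st J d)) by ring.
    eapply Rle_trans; [apply Rabs_triang | lra].
Qed.

Lemma server_iter_mem k J : (J < ns)%nat -> X (xs k J).
Proof.
  revert J. induction k as [|k IH]; intros J HJ; [exact (Hx0 J HJ)|].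
  destruct (convex_weighted_sum D X ns (fun J0 => B k J J0) (inner k Delta (xs k)))
    as [p [Hp Ep]]; auto.
  - intros j Hj. apply (inner_iter_spec k (xs k) IH Delta j); auto.
  - rewrite HBrow; auto; lra.
  - cbn [server_iter]. rewrite Ep, HBrow by exact HJ.
    replace (vscale 1 p) with p; [exact Hp|].
    apply functional_extensionality. intros d. unfold vscale. ring.
Qed.

Lemma kappa_le_1 : kappa <= 1.
Proof.
  destruct (HBscr 0%nat 0%nat 0%nat ltac:(lia) ltac:(lia)) as [J [HJ [HB _]]].
  eapply Rle_trans; [apply (HBkappa 0%nat 0%nat J); auto; lia|].
  rewrite <- (HBrow 0%nat 0%nat) by lia.
  apply (rsum_ge_term ns (fun J => B 0%nat 0%nat J)); auto.
Qed.

Local Notation coord_spread k d := (spread ns (fun J => xs k J d)).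

(* The local steps widen the spread by at most twice their total displacement; averaging
   with the scrambling matrix then shrinks it by [1 - kappa]. *)
Lemma coord_spread_succ_le k d : (d < D)%nat ->
  coord_spread (S k) d <= (1 - kappa) * (coord_spread k d + 2 * (INR Delta * (step_bound * alpha k))).
Proof.
  intros Hd. set (z := inner k Delta (xs k)).
  assert (Hzx : spread ns (fun J => z J d) <= coord_spread k d + 2 * (INR Delta * (step_bound * alpha k))).
  { apply spread_perturb; auto. intros J HJ.
    apply (inner_iter_spec k (xs k) (server_iter_mem k) Delta J); auto. }
  assert (Hcontract : coord_spread (S k) d <= (1 - kappa) * spread ns (fun J => z J d)).
  { apply spread_le; auto. intros I G HI HG. apply weighted_avg_sub_le; auto.
    destruct (HBscr k I G HI HG) as [J [HJ [HBI HBG]]].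
    exists J. repeat split; auto; apply HBkappa; auto.
    intros j Hj. split; [apply (minf_lb ns (fun J => z J d)) | apply (maxf_ub ns (fun J => z J d))]; auto. }
  pose proof kappa_le_1. nra.
Qed.

Local Notation disagreement k := (rsum D (fun d => coord_spread k d)).

Lemma disagreement_succ_le k :
  disagreement (S k) <= (1 - kappa) * disagreement k + (1 - kappa) * (INR D * (2 * (INR Delta * step_bound))) * alpha k.
Proof.
  eapply Rle_trans; [apply rsum_le; intros d Hd; apply coord_spread_succ_le, Hd|].
  rewrite rsum_scal, rsum_add, rsum_const. right. ring.
Qed.

Lemma server_iter_consensus : Un_cv alpha 0 ->
  Un_cv (fun k => rmax ns (fun I => rmax ns (fun G => norm D (vsub (xs k I) (xs k G))))) 0.
Proof.
  intros Ha.
  assert (HV : Un_cv (fun k => disagreement k) 0).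
  { apply (contracting_recursion_cv_0 _ _ (1 - kappa) (ltac:(pose proof kappa_le_1; lra))
      (fun k => rsum_nonneg D _ (fun d _ => spread_nonneg ns _ Hns)) disagreement_succ_le).
    replace 0 with ((1 - kappa) * (INR D * (2 * (INR Delta * step_bound))) * 0) by ring.
    apply CV_mult; [apply Un_cv_const | exact Ha]. }
  intros eps Heps. destruct (HV eps Heps) as [K HK]. exists K. intros k Hk.
  specialize (HK k Hk). unfold R_dist in *. rewrite Rminus_0_r in *.
  rewrite Rabs_pos_eq in HK by (apply rsum_nonneg; intros; apply spread_nonneg, Hns).
  rewrite Rabs_pos_eq by apply rmax_nonneg.
  eapply Rle_lt_trans; [| exact HK].
  apply rmax_lub; [apply rsum_nonneg; intros; apply spread_nonneg, Hns|]. intros I HI.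
  apply rmax_lub; [apply rsum_nonneg; intros; apply spread_nonneg, Hns|]. intros G HG.
  eapply Rle_trans; [apply norm_le_rsum_abs|]. apply rsum_le. intros d Hd.
  apply (Rabs_sub_le_spread ns (fun J => xs k J d)); auto.
Qed.

End Consensus.

Theorem claim1
  (S C D Delta : nat) (HS : (1 <= S)%nat) (HC : (1 <= C)%nat)
  (HD : (1 <= D)%nat) (HDelta : (1 <= Delta)%nat)
  (X : Vec -> Prop) (HX : ncc_set D X)
  (P : Vec -> Vec) (HP : is_projection D X P)
  (f : nat -> Vec -> R) (g : nat -> Vec -> Vec) (L N : nat -> R)
  (Hgrad : forall h, (h < C)%nat -> is_gradient D (f h) (g h))
  (Hcont : forall h, (h < C)%nat -> continuous_on_RD D (g h))
  (Hconv : forall h, (h < C)%nat -> convex_fun D (f h))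
  (HL : forall h x, (h < C)%nat -> X x -> norm D (g h x) <= L h)
  (HNpos : forall h, (h < C)%nat -> 0 < N h)
  (HN : forall h x y, (h < C)%nat -> X x -> X y ->
          norm D (vsub (g h x) (g h y)) <= N h * norm D (vsub x y))
  (W : nat -> nat -> nat -> nat -> R)
  (M Mbar : R) (HM : 0 < M) (HMbar : 0 < Mbar)
  (HSLC : forall k h, (h < C)%nat ->
          rsum Delta (fun i => rsum S (fun J => W i k J h)) = M)
  (HBUC : forall k h, (h < C)%nat ->
          rsum Delta (fun i => rsum S (fun J => Rabs (W i k J h))) <= Mbar)
  (B : nat -> nat -> nat -> R) (kappa : R) (Hkappa : 0 < kappa)
  (HBnn : forall k I J, (I < S)%nat -> (J < S)%nat -> 0 <= B k I J)
  (HBrow : forall k I, (I < S)%nat -> rsum S (fun J => B k I J) = 1)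
  (HBcol : forall k J, (J < S)%nat -> rsum S (fun I => B k I J) = 1)
  (HBscr : forall k, scrambling S (B k))
  (HBkappa : forall k I J, (I < S)%nat -> (J < S)%nat -> 0 < B k I J -> kappa <= B k I J)
  (alpha : nat -> R)
  (Hapos : forall k, 0 < alpha k)
  (Hadec : forall k, alpha (Datatypes.S k) <= alpha k)
  (Hadiv : cv_infty (fun n => sum_f_R0 alpha n))
  (Hasq : exists l, Un_cv (fun n => sum_f_R0 (fun k => alpha k ^ 2) n) l)
  (x0 : nat -> Vec) (Hx0 : forall J, (J < S)%nat -> X (x0 J)) :
  Un_cv (fun k =>
     let x := server_iter S C Delta P alpha W B g x0 k in
     rmax S (fun I => rmax S (fun G => norm D (vsub (x I) (x G))))) 0.
Proof.
  destruct HX as [HXin [_ [Hcvx _]]].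
  assert (Hgin : forall h x, (h < C)%nat -> inRD D x -> inRD D (g h x))
    by (intros h x Hh Hx; exact (proj1 (Hgrad h Hh x Hx))).
  assert (HW : forall k i J h, (i < Delta)%nat -> (J < S)%nat -> (h < C)%nat ->
            Rabs (W i k J h) <= Mbar).
  { intros k i J h Hi HJ Hh. eapply Rle_trans; [| exact (HBUC k h Hh)].
    exact (Rabs_le_rsum2_abs Delta S (fun i J => W i k J h) i J Hi HJ). }
  assert (Halpha : forall k, 0 <= alpha k) by (intros; left; apply Hapos).
  assert (Halpha_cv : Un_cv alpha 0).
  { destruct Hasq as [l Hl]. exact (Un_cv_0_of_sq alpha Halpha (series_terms_cv_0 _ l Hl)). }
  exact (server_iter_consensus S C D Delta X P g L W Mbar B kappa alpha x0
           HS HXin Hcvx HP Hgin HL HW Halpha Hkappa HBnn HBrow HBscr HBkappa Hx0 Halpha_cv).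
Qed.
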